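(* For every finite rooted forest $F$, the sequence of coefficients of the descent polynomial $A_F(q)$ is unimodal, i.e. writing $A_F(q)=\sum_{k=0}^{e}a_kq^k$ (with $e$ the number of edges of $F$), there is an index $j$ with $a_0\le a_1\le\cdots\le a_j\ge a_{j+1}\ge\cdots\ge a_e$.
   Context: A rooted forest $F$ is a finite disjoint union of rooted trees; each non-root vertex $v$ has a unique parent. A labeling of $F$ with $n$ vertices is a bijection $w: V(F)\to\{1,\dots,n\}$; $\mathcal{W}(F)$ denotes the set of all $n!$ labelings. The descent set is $\mathrm{Des}(F,w)=\{v\in V(F): v \text{ has a parent } u \text{ and } w(v)>w(u)\}$, and $\mathrm{des}(F,w)=|\mathrm{Des}(F,w)|$. The descent polynomial is $A_F(q)=\sum_{w\in\mathcal{W}(F)} q^{\mathrm{des}(F,w)}$. *)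

From mathcomp Require Import all_boot  .
Set Implicit Arguments. Unset Strict Implicit. Unset Printing Implicit Defensive.

(* A rooted forest on the finite vertex type V is given by a parent map:
   [parent v = Some u] means u is the parent of v, [None] means v is a root. *)
Definition is_rooted_forest (V : finType) (parent : V -> option V) : Prop :=
  forall v : V, exists k : nat, iter k (obind parent) (Some v) = None.

(* Labelings: bijections V -> {1..|V|}, represented (shifted by one) as
   bijections V -> 'I_#|V|, i.e. V-indexed injective maps. *)
Definition descent (V : finType) (parent : V -> option V)
  (w : V -> nat) (v : V) : bool :=
  if parent v is Some u then w u < w v else false.

Definition des (V : finType) (parent : V -> option V) (w : V -> nat) : nat :=
  #|[pred v | descent parent w v]|.

Definition nedges (V : finType) (parent : V -> option V) : nat :=
  #|[pred v : V | parent v != None]|.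

Definition desc_coef (V : finType) (parent : V -> option V) (k : nat) : nat :=
  #|[pred w : {ffun V -> 'I_#|V|} | injectiveb w &&
       (des parent (fun v => nat_of_ord (w v)) == k)]|.

Definition unimodal_upto (a : nat -> nat) (e : nat) : Prop :=
  exists2 j, j <= e &
    (forall i, i < j -> a i <= a i.+1) /\ (forall i, j <= i -> i < e -> a i.+1 <= a i).

From mathcomp Require Import all_boot.
From mathcomp Require Import zify.
Set Implicit Arguments. Unset Strict Implicit. Unset Printing Implicit Defensive.

(* Encode a labeling by the ordering [t] of the vertices by increasing label: a vertex
   is a descent iff its parent comes earlier in [t].  Reversing [t] exchanges descents
   and ascents along every edge, so a_k = a_(e-k).  Splitting the orderings of a vertex
   set S by their first vertex x, whose c_x children all become descents, gives
   a_k(S) = sum_x a_(k-c_x)(S \ x); since S \ x still carries at least e - 1 - c_x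
   edges, induction on |S| yields a_k <= a_(k+1) whenever 2k+1 < e, and symmetry
   settles 2k+1 = e and the decreasing half. *)

Lemma index_rev (T : eqType) (s : seq T) x : uniq s -> x \in s ->
  index x (rev s) = size s - (index x s).+1.
Proof.
move=> s_uniq s_x; have lt_xs : index x s < size s by rewrite index_mem.
have def_x : x = nth x (rev s) (size s - (index x s).+1).
  rewrite nth_rev; last lia.
  by rewrite (_ : size s - _ = index x s) ?nth_index //; lia.
by rewrite {1}def_x index_uniq ?rev_uniq ?size_rev //; lia.
Qed.

Lemma eq_from_index (T : eqType) (s1 s2 : seq T) : uniq s1 -> perm_eq s1 s2 ->
  (forall x, index x s1 = index x s2) -> s1 = s2.
Proof.
case: s1 => [|x0 s1] s1_uniq eq_s12 eq_index.
  by move: eq_s12; rewrite perm_sym => /perm_nilP ->.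
apply: (@eq_from_nth _ x0); first exact: perm_size.
move=> i lt_i; set x := nth x0 _ i.
have s2_x : x \in s2 by rewrite -(perm_mem eq_s12) mem_nth.
by rewrite -(nth_index x0 s2_x) -eq_index index_uniq.
Qed.

Lemma count_add (T : eqType) (a b c : pred T) s :
  {in s, forall x, c x = a x + b x :> nat} -> count c s = count a s + count b s.
Proof.
elim: s => //= x s IHs cab; rewrite cab ?mem_head // IHs => [|y s_y].
  exact: addnACA.
by apply: cab; rewrite inE s_y orbT.
Qed.

Lemma card_pred_count (T : finType) (P : pred T) : #|[pred x | P x]| = count P (enum T).
Proof. by rewrite cardE -size_filter enumT /enum_mem. Qed.

Lemma count_permutations_cons (T : eqType) (P : pred (seq T)) s :
  uniq s -> s != [::] ->
  count P (permutations s) = \sum_(x <- s) count (P \o cons x) (permutations (rem x s)).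
Proof.
move=> s_uniq s_nil; rewrite (permP (permutationsE _)) ?lt0n ?size_eq0 //.
rewrite undup_id // count_flatten sumnE !big_map.
by apply: eq_bigr => x _; rewrite count_map.
Qed.

Lemma count_permutations_rev (T : eqType) (P : pred (seq T)) s :
  count P (permutations s) = count (P \o rev) (permutations s).
Proof.
suff /permP eq_counts : perm_eq (permutations s) (map rev (permutations s)).
  by rewrite eq_counts count_map.
apply: uniq_perm => [||t].
- exact: permutations_uniq.
- by rewrite (map_inj_uniq (can_inj revK)) permutations_uniq.
apply/idP/mapP => [s_t | [u s_u ->]].
  by exists (rev t); rewrite ?revK // mem_permutations perm_rev -mem_permutations.
by rewrite mem_permutations perm_rev -mem_permutations.
Qed.

Section OrderingDescents.

Variables (V : finType) (parent : V -> option V).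
Hypothesis parent_neq : forall v, parent v != Some v.

Definition has_parent_in (S : seq V) v :=
  if parent v is Some u then u \in S else false.

Definition edges_in (S : seq V) := count (has_parent_in S) S.

Definition nchildren x (S : seq V) := count (fun v => parent v == Some x) S.

Definition descents (t : seq V) := count (descent parent (index^~ t)) t.

Definition desc_coef_on (S : seq V) k :=
  count (fun t => descents t == k) (permutations S).

Lemma edges_in_perm t S : perm_eq t S -> edges_in t = edges_in S.
Proof.
move=> eq_tS; rewrite /edges_in (permP eq_tS); apply: eq_count => v.
by rewrite /has_parent_in; case: (parent v) => // u; rewrite (perm_mem eq_tS).
Qed.

Lemma edges_in_cons x t : x \notin t ->
  edges_in (x :: t) = has_parent_in t x + nchildren x t + edges_in t.
Proof.
move=> t'x; rewrite /edges_in /= -addnA; congr addn.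
  rewrite /has_parent_in; case E: (parent x) => [u|] //.
  by rewrite inE; case: eqP => // u_x; move: (parent_neq x); rewrite E u_x eqxx.
apply: count_add => v t_v; rewrite /has_parent_in.
case: (parent v) => [u|] //; rewrite inE.
case: (eqVneq u x) => [->|ux]; first by rewrite eqxx (negbTE t'x).
by rewrite -[Some u == Some x]/(u == x) (negbTE ux).
Qed.

Lemma descents_cons x t : x \notin t ->
  descents (x :: t) = nchildren x t + descents t.
Proof.
move=> t'x; rewrite /descents /=.
have -> : descent parent (fun y => if x == y then 0 else (index y t).+1) x = false.
  by rewrite /descent (eqxx x); case: (parent x).
apply: count_add => v t_v; rewrite /descent.
have -> : (x == v) = false by apply: contraNF t'x => /eqP->.
case: (parent v) => [u|] //=.
case: (eqVneq u x) => [->|ux].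
  by rewrite eqxx (memNindex t'x) [size t < _]ltnNge index_size.
by rewrite ltnS -[Some u == Some x]/(u == x) (negbTE ux).
Qed.

Lemma descents_rev t : uniq t -> descents t + descents (rev t) = edges_in t.
Proof.
move=> t_uniq; rewrite /descents count_rev /edges_in; apply/esym/count_add => v t_v.
rewrite /has_parent_in /descent; case E: (parent v) => [u|] //.
have [t_u | t'u] := boolP (u \in t); last first.
  have t'u_rev : u \notin rev t by rewrite mem_rev.
  by rewrite (memNindex t'u) (memNindex t'u_rev) ![size _ < _]ltnNge !index_size.
have u'v : u != v by apply/eqP => uv; move: (parent_neq v); rewrite E uv eqxx.
have ne_uv : index u t != index v t.
  by apply: contra u'v => /eqP/(index_inj u t_u t_v)->.
have lt_ut : index u t < size t by rewrite index_mem.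
have lt_vt : index v t < size t by rewrite index_mem.
rewrite (index_rev t_uniq t_u) (index_rev t_uniq t_v).
by case: ltnP => ?; case: ltnP => ? /=; lia.
Qed.

Lemma desc_coef_on_sym S k : uniq S -> k <= edges_in S ->
  desc_coef_on S (edges_in S - k) = desc_coef_on S k.
Proof.
move=> S_uniq le_kE; rewrite /desc_coef_on [RHS]count_permutations_rev.
apply: eq_in_count => t; rewrite mem_permutations => eq_tS /=.
have t_uniq : uniq t by rewrite (perm_uniq eq_tS).
have := descents_rev t_uniq; rewrite (edges_in_perm eq_tS).
(* [set] matches the two differently elaborated copies of [rev t]; [lia] would not. *)
set d_rev := descents (rev t) => sum_tE.
by apply/idP/idP => /eqP ?; apply/eqP; lia.
Qed.

Lemma desc_coef_on_cons S k : uniq S -> S != [::] ->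
  desc_coef_on S k = \sum_(x <- S) (nchildren x (rem x S) <= k) *
                       desc_coef_on (rem x S) (k - nchildren x (rem x S)).
Proof.
move=> S_uniq S_nil; rewrite /desc_coef_on count_permutations_cons //.
apply: eq_big_seq => x _; set c := nchildren x (rem x S).
have shift t : t \in permutations (rem x S) -> descents (x :: t) = c + descents t.
  rewrite mem_permutations => eq_t; rewrite descents_cons; last first.
    by rewrite (perm_mem eq_t) mem_rem_uniqF.
  by congr addn; apply: (permP eq_t).
case: leqP => [le_ck | lt_kc]; rewrite ?mul1n ?mul0n.
  apply: eq_in_count => t /shift /= ->.
  by apply/idP/idP => /eqP ?; apply/eqP; lia.
rewrite (eq_in_count (a2 := pred0)) ?count_pred0 // => t /shift /= ->.
by apply/eqP; lia.
Qed.

Lemma desc_coef_on_leS S k : uniq S -> 2 * k < edges_in S ->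
  desc_coef_on S k <= desc_coef_on S k.+1.
Proof.
have [n] := ubnP (size S); elim: n S k => // n IHn S k /ltnSE le_Sn S_uniq lt_2kE.
have [le_E | lt_E] := leqP (edges_in S) (2 * k).+1.
  rewrite -(desc_coef_on_sym (k := k.+1)) //; last lia.
  by rewrite (_ : edges_in S - k.+1 = k) //; lia.
have S_nil : S != [::] by apply: contraTneq lt_2kE => ->.
rewrite !desc_coef_on_cons // !big_seq; apply: leq_sum => x S_x.
set S' := rem x S; set c := nchildren x S'.
have x'S' : x \notin S' by rewrite mem_rem_uniqF.
have E_split := edges_in_cons x'S'.
rewrite -(edges_in_perm (perm_to_rem S_x)) -/c in E_split.
have le_pin1 : has_parent_in S' x <= 1 by case: has_parent_in.
case: (leqP c k) => [le_ck | lt_kc]; last by rewrite mul0n.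
rewrite (leqW le_ck) !mul1n subSn //; apply: IHn.
- by move: S_nil; rewrite size_rem // -size_eq0; lia.
- exact: rem_uniq.
- lia.
Qed.

Lemma desc_coef_on_unimodal S : uniq S ->
  unimodal_upto (desc_coef_on S) (edges_in S).
Proof.
move=> S_uniq; exists (edges_in S %/ 2); first exact: leq_div.
split=> [i lt_ij | i le_ji lt_iE]; first by apply: desc_coef_on_leS => //; lia.
rewrite -(desc_coef_on_sym S_uniq lt_iE).
rewrite -(desc_coef_on_sym S_uniq (ltnW lt_iE)) (_ : _ - i = (edges_in S - i.+1).+1).
  by apply: desc_coef_on_leS => //; lia.
lia.
Qed.

End OrderingDescents.

Section Labelings.

Variable V : finType.

(* [enum_rank v] is only a default: [index v t < #|V|] when [t] orders [enum V]. *)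
Definition labeling_of (t : seq V) : {ffun V -> 'I_#|V|} :=
  [ffun v => insubd (enum_rank v) (index v t)].

Lemma labeling_ofE t v : perm_eq t (enum V) -> labeling_of t v = index v t :> nat.
Proof.
move=> eq_t; rewrite ffunE val_insubd (_ : index v t < #|V|) //.
by rewrite cardE -(perm_size eq_t) index_mem (perm_mem eq_t) mem_enum.
Qed.

Lemma labeling_of_injective t : perm_eq t (enum V) -> injectiveb (labeling_of t).
Proof.
move=> eq_t; apply/injectiveP => u v /(congr1 val); rewrite /= !labeling_ofE //.
by apply: (index_inj u); rewrite (perm_mem eq_t) mem_enum.
Qed.

Lemma labeling_of_inj : {in permutations (enum V) &, injective labeling_of}.
Proof.
move=> t1 t2; rewrite !mem_permutations => eq_t1 eq_t2 eq_w.
apply: eq_from_index => [||v]; first by rewrite (perm_uniq eq_t1) enum_uniq.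
  by rewrite (permPr eq_t2).
by rewrite -!labeling_ofE // eq_w.
Qed.

Lemma labelings_uniq : uniq (map labeling_of (permutations (enum V))).
Proof. by rewrite (map_inj_in_uniq labeling_of_inj) permutations_uniq. Qed.

Lemma mem_labelings w :
  (w \in map labeling_of (permutations (enum V))) = injectiveb w.
Proof.
set L := map _ _; set Inj := [set w : {ffun V -> 'I_#|V|} | injectiveb w].
have sub_L : L \subset Inj.
  apply/subsetP => _ /mapP[t + ->].
  by rewrite mem_permutations inE; apply: labeling_of_injective.
have card_L : #|L| = #|Inj|.
  rewrite card_inj_ffuns card_ord ffactnn (card_uniqP labelings_uniq) size_map.
  by rewrite size_permutations ?enum_uniq // -cardE.
by rewrite (subset_cardP card_L sub_L) inE.
Qed.

Lemma des_labeling_of (parent : V -> option V) t : perm_eq t (enum V) ->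
  des parent (fun v => labeling_of t v) = descents parent t.
Proof.
move=> eq_t; rewrite /des card_pred_count -(permP eq_t); apply: eq_count => v.
by rewrite /descent; case: (parent v) => // u; rewrite !labeling_ofE.
Qed.

Lemma desc_coefE (parent : V -> option V) k :
  desc_coef parent k = desc_coef_on parent (enum V) k.
Proof.
set L := map labeling_of (permutations (enum V)).
transitivity
  #|[seq w : {ffun V -> 'I_#|V|} <- L | des parent (fun v => nat_of_ord (w v)) == k]|.
  by apply: eq_card => w; rewrite inE mem_filter mem_labelings andbC.
rewrite (card_uniqP (filter_uniq _ labelings_uniq)) size_filter count_map.
by apply: eq_in_count => t; rewrite mem_permutations => /des_labeling_of /= ->.
Qed.

End Labelings.

Lemma rooted_forest_parent_neq (V : finType) (parent : V -> option V) :
  is_rooted_forest parent -> forall v, parent v != Some v.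
Proof.
move=> forest v; apply/eqP => loop_v; have [k] := forest v.
suff -> : iter k (obind parent) (Some v) = Some v by [].
by elim: k => //= k ->; rewrite /= loop_v.
Qed.

Lemma nedgesE (V : finType) (parent : V -> option V) :
  nedges parent = edges_in parent (enum V).
Proof.
rewrite /nedges card_pred_count; apply: eq_count => v.
by rewrite /has_parent_in; case: (parent v) => // u; rewrite mem_enum.
Qed.

Theorem theorem2p3 (V : finType) (parent : V -> option V) :
  is_rooted_forest parent ->
  unimodal_upto (desc_coef parent) (nedges parent).
Proof.
move=> /rooted_forest_parent_neq parent_neq.
have [j le_jE [incr decr]] := desc_coef_on_unimodal parent_neq (enum_uniq V).
exists j; rewrite nedgesE //.
by split=> i *; rewrite !desc_coefE; [apply: incr | apply: decr].
Qed.
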